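(* Let $P$ be a set of $n\geq 5$ points in general position in the plane, let $\mathcal{P}$ be the set of all closed segments with both endpoints in $P$, let $\mathcal{S}\subseteq\mathcal{P}$ with $s:=|\mathcal{S}|$, and let $\mathcal{P}':=\mathcal{P}\setminus\mathcal{S}$. Suppose that every pair of distinct segments $a,b\in\mathcal{P}'$ satisfies exactly one of the following: (1) $d_{D(P)}(a,b)=1$ (equivalently $a\cap b=\emptyset$); (2) $d_{D(P)}(a,b)=2$ and there is $f_1\in\mathcal{S}$ with $(a\cup b)\cap f_1=\emptyset$; (3) $d_{D(P)}(a,b)=3$ and there are $f_1,f_2\in\mathcal{S}$ with $a\cap f_1=\emptyset$, $f_1\cap f_2=\emptyset$ and $f_2\cap b=\emptyset$; (4) $d_{D(P)}(a,b)=4$, $n=5$, and there are $f_1,f_2,f_3\in\mathcal{S}$ such that $a\cap f_1=\emptyset=f_3\cap b$, $a\cap h\neq\emptyset$ for $h\in\{f_2,f_3\}$, $b\cap h\neq\emptyset$ for $h\in\{f_1,f_2\}$, $f_i\cap f_{i+1}=\emptyset$ for $i\in\{1,2\}$, and $f_1\cap f_3\neq\emptyset$. Then $\mu(D(P))\geq\binom{n}{2}-s$.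
   Context: General position means no three points collinear. $D(P)$ is the graph with vertex set $\mathcal{P}$, two segments adjacent iff they are disjoint; $d_{D(P)}$ is graph distance in $D(P)$. For a graph $G$ and $U\subseteq V(G)$, two distinct vertices $x,y\in U$ are $U$-mutually visible if $G$ contains a shortest $x$-$y$ path none of whose internal vertices lies in $U$; $U$ is a mutual-visibility set if every two distinct vertices of $U$ are $U$-mutually visible. $\mu(G)$ is the maximum size of a mutual-visibility set of $G$. *)

From HB Require Import structures.
From mathcomp Require Import all_boot all_order all_algebra.
From mathcomp Require Import boolp reals.
Set Implicit Arguments. Unset Strict Implicit. Unset Printing Implicit Defensive.
Import Order.TTheory GRing.Theory Num.Theory.
Local Open Scope ring_scope.

Section Graph.
Variables (V : finType) (adj : V -> V -> Prop).

(* [walk x s y]: s is the list of vertices visited after x, ending at y. *)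
Inductive walk : V -> seq V -> V -> Prop :=
| walk_nil x : walk x [::] x
| walk_cons x z s y : adj x z -> walk z s y -> walk x (z :: s) y.

Definition shortest (x : V) (s : seq V) (y : V) : Prop :=
  walk x s y /\ forall s', walk x s' y -> (size s <= size s')%N.

Definition gdist (x y : V) (d : nat) : Prop :=
  exists s, shortest x s y /\ size s = d.

(* internal vertices of the path x :: s (s ends at y) *)
Definition internal (s : seq V) : seq V := take (size s).-1 s.

Definition mutually_visible (U : {set V}) (x y : V) : Prop :=
  exists s, shortest x s y /\ forall z, z \in internal s -> z \notin U.

Definition mv_set (U : {set V}) : Prop :=
  forall x y, x \in U -> y \in U -> x != y -> mutually_visible U x y.

Definition mu : nat := \max_(U : {set V} | `[< mv_set U >]) #|U|.
End Graph.

Section Plane.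
Variable R : realType.
Definition point := (R * R)%type.

Definition collinear (a b c : point) : Prop :=
  (b.1 - a.1) * (c.2 - a.2) - (b.2 - a.2) * (c.1 - a.1) = 0.

Definition on_segment (a b x : point) : Prop :=
  exists t : R, 0 <= t <= 1 /\
    x = (a.1 + t * (b.1 - a.1), a.2 + t * (b.2 - a.2)).
End Plane.

(* Segments with endpoints among n labelled points: pairs (i,j), i < j. *)
Definition seg (n : nat) := {ij : 'I_n * 'I_n | (ij.1 < ij.2)%N}.

Definition seg_pts (R : realType) n (p : 'I_n -> point R) (e : seg n) (x : point R) : Prop :=
  on_segment (p (val e).1) (p (val e).2) x.

Definition seg_disjoint (R : realType) n (p : 'I_n -> point R) (e f : seg n) : Prop :=
  ~ exists x, seg_pts p e x /\ seg_pts p f x.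

Definition general_position (R : realType) n (p : 'I_n -> point R) : Prop :=
  forall i j k : 'I_n, i != j -> j != k -> i != k -> ~ collinear (p i) (p j) (p k).

Definition DP (R : realType) n (p : 'I_n -> point R) : seg n -> seg n -> Prop :=
  seg_disjoint p.

(* Proof: for two distinct segments outside S, each of the four alternatives
   exhibits a shortest path of D(P) whose internal vertices f_i all lie in S
   (a single edge in case (1)). Hence the complement of S is a
   mutual-visibility set, of size 'C(n, 2) - |S|. *)
From HB Require Import structures.
From mathcomp Require Import all_boot all_order all_algebra.
From mathcomp Require Import boolp reals.
Import Order.TTheory GRing.Theory Num.Theory.
Set Implicit Arguments. Unset Strict Implicit.

Section MutualVisibility.
Variables (V : finType) (adj : V -> V -> Prop).

Lemma shortest_gdist x s y :
  gdist adj x y (size s) -> walk adj x s y -> shortest adj x s y.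
Proof.
move=> [s0 [[_ min_s0] size_s0]] xsy; split=> // s' xs'y.
by rewrite -size_s0; apply: min_s0.
Qed.

Lemma mutually_visible_walk (U : {set V}) x s y :
  gdist adj x y (size s) -> walk adj x s y ->
  all [pred z | z \notin U] (internal s) -> mutually_visible adj U x y.
Proof.
move=> dxy xsy /allP notU; exists s; split; first exact: shortest_gdist.
exact: notU.
Qed.

Lemma mutually_visible_gdist1 (U : {set V}) x y :
  gdist adj x y 1 -> mutually_visible adj U x y.
Proof.
move=> [s [xsy size_s]]; exists s; split=> // z.
by case: s size_s {xsy} => [|? []].
Qed.

Lemma mv_set_leq_mu (U : {set V}) : mv_set adj U -> (#|U| <= mu adj)%N.
Proof.
move=> mvU; apply: (leq_bigmax_cond (P := fun U => `[< mv_set adj U >])).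
exact/asboolP.
Qed.

End MutualVisibility.

Lemma card_seg n : #|{: seg n}| = 'C(n, 2).
Proof.
rewrite -card_ltn_sorted_tuples card_sig.
pose ends (t : 2.-tuple 'I_n) := (thead t, tnth t (@Ordinal 2 1 isT)).
have ends_inj : injective ends.
  move=> t1 t2 [eq0 eq1]; apply: eq_from_tnth => -[[|[|//]] lt_i2].
    by rewrite (_ : Ordinal lt_i2 = ord0) //; apply: val_inj.
  by rewrite (_ : Ordinal lt_i2 = Ordinal (isT : (1 < 2)%N)) //; apply: val_inj.
rewrite -(card_imset _ ends_inj); apply: eq_card => -[i j]; rewrite inE /=.
apply/idP/imsetP => [lt_ij | [t]]; last first.
  rewrite inE => + [-> ->].
  by case: t => -[|a [|b []]] //= ?; rewrite andbT.
by exists [tuple i; j]; rewrite ?inE /= ?andbT.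
Qed.

Lemma seg_disjoint_sym (R : realType) n (p : 'I_n -> point R) a b :
  seg_disjoint p a b -> seg_disjoint p b a.
Proof. by move=> dab [x [bx ax]]; apply: dab; exists x. Qed.

Theorem lemma7 (R : realType) (n : nat) (p : 'I_n -> point R) (S : {set seg n}) :
  (5 <= n)%N ->
  injective p ->
  general_position p ->
  (forall a b : seg n, a \notin S -> b \notin S -> a != b ->
     [\/ gdist (DP p) a b 1,
         gdist (DP p) a b 2 /\
           (exists f1, f1 \in S /\ seg_disjoint p a f1 /\ seg_disjoint p b f1),
         gdist (DP p) a b 3 /\
           (exists f1 f2, [/\ f1 \in S, f2 \in S, seg_disjoint p a f1,
                              seg_disjoint p f1 f2 & seg_disjoint p f2 b]) |
         [/\ gdist (DP p) a b 4, n = 5 &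
           exists f1 f2 f3, f1 \in S /\ f2 \in S /\ f3 \in S /\
             seg_disjoint p a f1 /\ seg_disjoint p f3 b /\
             ~ seg_disjoint p a f2 /\ ~ seg_disjoint p a f3 /\
             ~ seg_disjoint p b f1 /\ ~ seg_disjoint p b f2 /\
             seg_disjoint p f1 f2 /\ seg_disjoint p f2 f3 /\
             ~ seg_disjoint p f1 f3]]) ->
  ('C(n, 2) - #|S| <= mu (DP p))%N.
Proof.
move=> _ _ _ paths_through_S.
have mvCS : mv_set (DP p) (~: S).
  move=> a b; rewrite !inE => aS bS neq_ab.
  case: (paths_through_S a b aS bS neq_ab) => [d1 | [d2 path2] | [d3 path3] | [d4 _ path4]].
  - exact: mutually_visible_gdist1.
  - have [f1 [f1S [af1 bf1]]] := path2.
    apply: (mutually_visible_walk (s := [:: f1; b]) d2); last by rewrite /= !inE f1S.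
    exact: walk_cons af1 (walk_cons (seg_disjoint_sym bf1) (walk_nil _ _)).
  - have [f1 [f2 [f1S f2S af1 f12 f2b]]] := path3.
    apply: (mutually_visible_walk (s := [:: f1; f2; b]) d3).
      exact: walk_cons af1 (walk_cons f12 (walk_cons f2b (walk_nil _ _))).
    by rewrite /= !inE f1S f2S.
  - have [f1 [f2 [f3 [f1S [f2S [f3S [af1 [f3b [_ [_ [_ [_ [f12 [f23 _]]]]]]]]]]]]]] := path4.
    apply: (mutually_visible_walk (s := [:: f1; f2; f3; b]) d4).
      exact: walk_cons af1 (walk_cons f12 (walk_cons f23 (walk_cons f3b (walk_nil _ _)))).
    by rewrite /= !inE f1S f2S f3S.
rewrite -card_seg -(cardsC S) addKn.
exact: mv_set_leq_mu.
Qed.
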